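(* Consider $n>1$ agents over a time-varying directed graph $\mathbb N(t)=(\mathcal N,\mathcal E(t))$ running the push-sum update $v_i(1)=1$, $v_i(t+1)=l_i(t)v_i(t)+\sum_{j\in\mathcal N_i^{\mathrm{in}}(t)}l_j(t)v_j(t)$, where $l_i(t)=1/(1+o_i(t))$, $o_i(t)$ is the out-degree of $i$ and $\mathcal N_i^{\mathrm{in}}(t)$ its set of in-neighbors at time $t$. Let $\mathcal N_i^+(t)=\mathcal N_i^{\mathrm{in}}(t)\cup\{i\}$ and define the matrix $S(t)$ by $s_{ij}(t)=\frac{l_j(t)v_j(t)}{\sum_{k\in\mathcal N_i^+(t)}l_k(t)v_k(t)}$ for $j\in\mathcal N_i^+(t)$ and $s_{ij}(t)=0$ otherwise. Assume that for every $t$ there is a symmetric stochastic matrix with positive diagonal whose off-diagonal entries vanish outside $\mathcal E(t)$, and that $\{\mathbb N(t)\}$ is repeatedly jointly strongly connected. Then the system $h(t+1)=S(t)h(t)$ is uniformly exponentially consensus stable: there exist a finite constant $\gamma>0$ and $0\le\lambda<1$ such that for any $t_0$ and any $h(t_0)$, $|h(t)|_\infty\le\gamma\lambda^{t-t_0}|h(t_0)|_\infty$ for all $t\ge t_0$.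
   Context: For $x\in\mathbb R^n$, $|x|_\infty=\frac12(\max_i x_i-\min_j x_j)$. Repeatedly jointly strongly connected: there is an integer $r\ge1$ such that for each $k\ge0$ the union of $\mathbb N(rk+1),\dots,\mathbb N(r(k+1))$ (edge sets united) is strongly connected. *)

From mathcomp Require Import all_boot all_order all_algebra.
From mathcomp Require Import reals.
Set Implicit Arguments. Unset Strict Implicit. Unset Printing Implicit Defensive.
Import Order.TTheory GRing.Theory Num.Theory.
Local Open Scope ring_scope.

Section PushSum.
Variables (R : realType) (n : nat).
(* E t j i  means the directed edge (j, i), i.e. j -> i, is in E(t). *)
Variable E : nat -> rel 'I_n.

Definition in_nbrs (t : nat) (i : 'I_n) : {set 'I_n} :=
  [set j | (j != i) && E t j i].
Definition in_nbrs_plus (t : nat) (i : 'I_n) : {set 'I_n} :=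
  i |: in_nbrs t i.
Definition out_deg (t : nat) (i : 'I_n) : nat :=
  #|[set j | (j != i) && E t i j]|.
Definition lw (t : nat) (i : 'I_n) : R := (1 + (out_deg t i)%:R)^-1.

Definition ps_step (t : nat) (v : 'I_n -> R) : 'I_n -> R :=
  fun i => lw t i * v i + \sum_(j in in_nbrs t i) lw t j * v j.

(* push-sum weights; time starts at 1: v(1) = 1, v(t+1) = step t (v t).
   (v 0 is set to 1 as well and is never used.) *)
Fixpoint ps_v (t : nat) : 'I_n -> R :=
  match t with
  | 0 => fun _ => 1
  | t'.+1 => if t' is 0 then (fun _ => 1) else ps_step t' (ps_v t')
  end.

Definition Smx (t : nat) : 'M[R]_n :=
  \matrix_(i, j)
    (if j \in in_nbrs_plus t i then
       lw t j * ps_v t j / \sum_(k in in_nbrs_plus t i) lw t k * ps_v t k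
     else 0).
End PushSum.

(* |x|_inf = (max_i x_i - min_j x_j)/2, written as max_{i,j}(x_i - x_j)/2 *)
Definition seminf (R : realType) (n : nat) (x : 'I_n -> R) : R :=
  (\big[Num.max/0]_(i < n) \big[Num.max/0]_(j < n) (x i - x j)) / 2.

Definition compatible_sym_stoch (R : realType) (n : nat) (Et : rel 'I_n) :=
  exists A : 'M[R]_n,
    [/\ A^T = A,
        forall i j, 0 <= A i j,
        forall i, \sum_j A i j = 1,
        forall i, 0 < A i i
      & forall i j, i != j -> ~~ Et i j -> A i j = 0].

(* repeatedly jointly strongly connected (time starts at 1) *)
Definition rep_jointly_sc (n : nat) (E : nat -> rel 'I_n) :=
  exists r : nat, (1 <= r)%N /\
    forall k : nat,
      let U := fun x y : 'I_n => [exists s : 'I_r, E (r * k + s + 1)%N x y] in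
      forall x y : 'I_n, connect U x y.

From mathcomp Require Import all_boot all_order all_algebra.
From mathcomp Require Import reals.
From mathcomp Require Import zify lra.
Import Order.TTheory GRing.Theory Num.Theory.
Local Open Scope ring_scope.
Set Implicit Arguments. Unset Strict Implicit. Unset Printing Implicit Defensive.

(* Write S(t) = diag(v(t+1))^-1 M(t) diag(v(t)), where M(t) is the push-sum matrix
   with entry l_j(t) at (i, j) for j in N_i^+(t).  M(t) is column stochastic, so the
   weights keep total mass n, and its nonzero entries are at least 1/n.  Any r n
   consecutive steps contain n - 1 complete connectivity windows, each of which
   enlarges the set of nodes reached so far, so a product of L = r n consecutive
   M(t) is entrywise at least n^-L; hence v_i(t) >= n^-L for all t >= 1 (for t <= L
   already through the self-loops).  Therefore every nonzero entry of the row
   stochastic S(t) is at least n^-(L+2), every product of L consecutive S(t) is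
   entrywise at least eta = n^-((L+2) L), and such a product shrinks |.|_inf by the
   factor 1 - 2 eta, while a single step never increases it. *)

Lemma connect_exit (T : finType) (e : rel T) (S : {set T}) x y :
  connect e x y -> x \in S -> y \notin S ->
  exists u w, [/\ u \in S, w \notin S & e u w].
Proof.
move=> /connectP [p]; elim: p x => [|z p IHp] x /=; first by move=> _ -> ->.
case/andP=> exz pz ylast xS yS.
have [zS | zNS] := boolP (z \in S); first exact: IHp pz ylast zS yS.
by exists x, z.
Qed.

Lemma proper_chain_full (T : finType) (S : nat -> {set T}) :
  S 0%N != set0 -> (forall m, S m \subset S m.+1) ->
  (forall m, S m != setT -> S m \proper S m.+1) -> S #|T|.-1 = setT.
Proof.
move=> S0 Ssub Sproper.
have card_S m : (minn m.+1 #|T| <= #|S m|)%N.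
  elim: m => [|m IHm]; first by move: S0; rewrite -card_gt0; lia.
  have [SmT | SmT] := eqVneq (S m) setT.
    by move: (Ssub m); rewrite SmT subTset => /eqP ->; rewrite cardsT geq_minr.
  have := proper_card (Sproper m SmT); lia.
apply/eqP; rewrite eqEcard subsetT cardsT.
by have := card_S #|T|.-1; case: #|T| => //= k; rewrite minnn.
Qed.

Section Reach.
Variables (T : finType) (E : nat -> rel T).
Local Open Scope nat_scope.

Fixpoint reach (k : nat) (j : T) : {set T} :=
  if k is k'.+1 then [set i | [exists l in reach k' j, (l == i) || E k' l i]]
  else [set j].

Lemma reach_step k j l i :
  l \in reach k j -> (l == i) || E k l i -> i \in reach k.+1 j.
Proof. by move=> lj eli; rewrite inE; apply/existsP; exists l; rewrite lj. Qed.

Lemma reach_subS k j : reach k j \subset reach k.+1 j.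
Proof. by apply/subsetP=> i ij; apply: reach_step ij _; rewrite eqxx. Qed.

Lemma reach_sub j : {homo reach^~ j : k m / k <= m >-> k \subset m}.
Proof.
apply: (homo_leq (f := reach^~ j) (r := fun A B => A \subset B)).
- exact: subxx.
- by move=> B A C; apply: subset_trans.
- by move=> p; apply: reach_subS.
Qed.

Lemma reach_self k j : j \in reach k j.
Proof. exact: subsetP (reach_sub j (leq0n k)) j (set11 j). Qed.

Lemma reach_window_proper r b j :
  (forall x y, connect (fun x y => [exists s : 'I_r, E (b + s) x y]) x y) ->
  reach b j != setT -> reach b j \proper reach (b + r) j.
Proof.
move=> conn; rewrite -subTset => /subsetPn [y _ yNreach].
have [u [w [ureach wNreach /existsP [s Euw]]]] :=
  connect_exit (conn j y) (reach_self b j) yNreach.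
apply/properP; split; first by apply: reach_sub; apply: leq_addr.
exists w => //; apply: subsetP (reach_sub j (_ : (b + s).+1 <= b + r)) _ _.
  by rewrite ltn_add2l.
apply: reach_step (subsetP (reach_sub j (leq_addr s b)) _ ureach) _.
by rewrite Euw orbT.
Qed.

Lemma reach_full r a j K :
  (forall k x y,
     connect (fun x y => [exists s : 'I_r, E (a + r * k + s) x y]) x y) ->
  a + r * #|T|.-1 <= K -> reach K j = setT.
Proof.
move=> conn le_K; apply/eqP; rewrite -subTset.
have <- /= : reach (a + r * #|T|.-1) j = setT.
  apply: (proper_chain_full (S := fun m => reach (a + r * m) j)).
  - by apply/set0Pn; exists j; apply: reach_self.
  - by move=> m; apply: reach_sub; lia.
  - by move=> m /= /(reach_window_proper (conn m)); rewrite mulnSr addnA.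
exact: reach_sub.
Qed.

End Reach.

Section MatrixProducts.
Variables (R : numDomainType) (n : nat).
Implicit Types (P Q : 'M[R]_n) (A : nat -> 'M[R]_n).

Definition row_stochastic Q :=
  (forall i j, 0 <= Q i j) /\ (forall i, \sum_j Q i j = 1).

Lemma row_stochastic1 : row_stochastic 1%:M.
Proof.
split=> [i j | i]; first by rewrite mxE ler0n.
rewrite (bigD1 i) //= big1 => [|j ji]; first by rewrite mxE eqxx addr0.
by rewrite mxE eq_sym (negbTE ji).
Qed.

Lemma row_stochasticM P Q :
  row_stochastic P -> row_stochastic Q -> row_stochastic (P *m Q).
Proof.
move=> [P_ge0 P1] [Q_ge0 Q1]; split=> [i j | i].
  by rewrite mxE; apply: sumr_ge0 => l _; apply: mulr_ge0.
under eq_bigr do rewrite mxE.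
by rewrite exchange_big /=; under eq_bigr do rewrite -mulr_sumr Q1 mulr1.
Qed.

Fixpoint mxprod A k : 'M[R]_n :=
  if k is k'.+1 then A k' *m mxprod A k' else 1%:M.

Lemma mxprod_row_stochastic A k :
  (forall t, row_stochastic (A t)) -> row_stochastic (mxprod A k).
Proof.
move=> A_st; elim: k => [|k IHk] /=; first exact: row_stochastic1.
exact: row_stochasticM.
Qed.

Lemma mxprod_ge0 A k i j : (forall t i j, 0 <= A t i j) -> 0 <= mxprod A k i j.
Proof.
move=> A_ge0; elim: k i j => [|k IHk] i j /=; first by rewrite mxE ler0n.
by rewrite mxE; apply: sumr_ge0 => l _; apply: mulr_ge0.
Qed.

Lemma mxprod_trajectory A (x : nat -> 'I_n -> R) :
  (forall t i, x t.+1 i = \sum_j A t i j * x t j) ->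
  forall k i, x k i = \sum_j mxprod A k i j * x 0%N j.
Proof.
move=> xS; elim=> [|k IHk] i /=.
  rewrite (bigD1 i) //= big1 => [|j ji]; first by rewrite mxE eqxx mul1r addr0.
  by rewrite mxE eq_sym (negbTE ji) mul0r.
rewrite xS; under [LHS]eq_bigr do rewrite IHk mulr_sumr.
rewrite exchange_big; apply: eq_bigr => j _; rewrite mxE mulr_suml.
by apply: eq_bigr => l _; rewrite mulrA.
Qed.

Lemma mxprod_reach_ge A (E : nat -> rel 'I_n) eps :
  0 <= eps -> (forall t i j, 0 <= A t i j) ->
  (forall t i l, (l == i) || E t l i -> eps <= A t i l) ->
  forall k i j, i \in reach E k j -> eps ^+ k <= mxprod A k i j.
Proof.
move=> eps_ge0 A_ge0 A_ge; elim=> [|k IHk] i j /=.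
  by rewrite inE => /eqP ->; rewrite mxE eqxx.
rewrite inE => /existsP [l /andP [lj eli]]; rewrite mxE (bigD1 l) //= exprS.
apply: ler_wpDr; first by apply: sumr_ge0 => m _; rewrite mulr_ge0 ?mxprod_ge0.
by apply: ler_pM => //; [exact: exprn_ge0 | exact: A_ge | exact: IHk].
Qed.

End MatrixProducts.

Section HalfRange.
Variables (R : realType) (n : nat).
Implicit Types x : 'I_n -> R.

Lemma seminf_ge x i j : (x i - x j) / 2 <= seminf x.
Proof.
rewrite /seminf ler_pM2r ?invr_gt0 ?ltr0n //.
exact: le_trans (le_bigmax _ _ j)
  (le_bigmax _ (fun i => \big[Num.max/0]_(j < n) (x i - x j)) i).
Qed.

Lemma seminf_ge0 x : (0 < n)%N -> 0 <= seminf x.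
Proof.
by move=> n_gt0; have := seminf_ge x (Ordinal n_gt0) (Ordinal n_gt0); rewrite subrr mul0r.
Qed.

Lemma seminf_le x c : (0 < n)%N -> (forall i j, x i - x j <= c) -> seminf x <= c / 2.
Proof.
move=> n_gt0 x_le.
have c_ge0 : 0 <= c by have := x_le (Ordinal n_gt0) (Ordinal n_gt0); rewrite subrr.
rewrite /seminf ler_pM2r ?invr_gt0 ?ltr0n //.
by apply: bigmax_le => // i _; apply: bigmax_le.
Qed.

Lemma eq_seminf x y : x =1 y -> seminf x = seminf y.
Proof.
by move=> xy; congr (_ / 2); apply: eq_bigr => i _; apply: eq_bigr => j _; rewrite !xy.
Qed.

Lemma seminf_row_stochastic_le Q eta x : (0 < n)%N ->
  row_stochastic Q -> (forall i j, eta <= Q i j) ->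
  seminf (fun i => \sum_j Q i j * x j) <= (1 - 2 * eta) * seminf x.
Proof.
move=> n_gt0 [Q_ge0 Q1] Q_ge.
have [a _ x_ge] := arg_minP x (P := xpredT) (i0 := Ordinal n_gt0) isT.
have [b _ x_le] := arg_maxP x (P := xpredT) (i0 := Ordinal n_gt0) isT.
have {}x_ge j : x a <= x j := x_ge j isT.
have {}x_le j : x j <= x b := x_le j isT.
have seminfE : seminf x = (x b - x a) / 2.
  apply/eqP; rewrite eq_le seminf_ge seminf_le // => i j.
  exact: lerB.
have avgB c i : \sum_j Q i j * x j - c = \sum_j Q i j * (x j - c).
  by under [RHS]eq_bigr do rewrite mulrBr; rewrite sumrB -mulr_suml Q1 mul1r.
have Bavg c i : c - \sum_j Q i j * x j = \sum_j Q i j * (c - x j).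
  by under [RHS]eq_bigr do rewrite mulrBr; rewrite sumrB -mulr_suml Q1 mul1r.
(* each row puts weight at least eta on the maximum and on the minimum of x *)
have row_le i : \sum_j Q i j * x j - x a >= eta * (x b - x a).
  rewrite avgB (bigD1 b) //= ler_wpDr ?ler_wpM2r ?subr_ge0 ?x_ge //.
  by apply: sumr_ge0 => j _; rewrite mulr_ge0 ?subr_ge0 ?x_ge.
have row_ge i : x b - \sum_j Q i j * x j >= eta * (x b - x a).
  rewrite Bavg (bigD1 a) //= ler_wpDr ?ler_wpM2r ?subr_ge0 ?x_le //.
  by apply: sumr_ge0 => j _; rewrite mulr_ge0 ?subr_ge0 ?x_le.
rewrite seminfE mulrA; apply: seminf_le => // i j.
by have := row_le j; have := row_ge i; lra.
Qed.

End HalfRange.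

Section PushSum.
Variables (R : realType) (n : nat) (E : nat -> rel 'I_n).
Hypothesis n_gt1 : (1 < n)%N.

Let n_gt0 : (0 < n)%N. Proof. exact: ltnW. Qed.
Let invn_ge0 : 0 <= n%:R^-1 :> R. Proof. by rewrite invr_ge0 ler0n. Qed.
Let invn_le1 : n%:R^-1 <= 1 :> R. Proof. by rewrite invf_le1 ?ltr0n // ler1n. Qed.

Lemma invn_expr_le_half m : (0 < m)%N -> n%:R^-1 ^+ m <= 2^-1 :> R.
Proof.
move=> m_gt0; apply: le_trans (_ : n%:R^-1 ^+ 1 <= _); first exact: ler_wiXn2l.
by rewrite expr1 lef_pV2 ?posrE ?ltr0n // ler_nat.
Qed.

Definition ps_mx t : 'M[R]_n :=
  \matrix_(i, j) if j \in in_nbrs_plus E t i then lw R E t j else 0.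

Lemma out_deg_lt t i : (out_deg E t i < n)%N.
Proof.
have sub : [set j | (j != i) && E t i j] \subset [set~ i].
  by apply/subsetP => j; rewrite !inE => /andP [].
by have := subset_leq_card sub; rewrite cardsC1 card_ord /out_deg; lia.
Qed.

Lemma lwE t i : lw R E t i = (out_deg E t i).+1%:R^-1.
Proof. by rewrite /lw addrC natr1. Qed.

Lemma lw_gt0 t i : 0 < lw R E t i.
Proof. by rewrite lwE invr_gt0 ltr0n. Qed.

Lemma lw_ge t i : n%:R^-1 <= lw R E t i.
Proof. by rewrite lwE lef_pV2 ?posrE ?ltr0n // ler_nat out_deg_lt. Qed.

Lemma ps_mx_ge0 t i j : 0 <= ps_mx t i j.
Proof. by rewrite mxE; case: ifP => // _; exact: ltW (lw_gt0 t j). Qed.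

Lemma ps_mx_ge t i l : (l == i) || E t l i -> n%:R^-1 <= ps_mx t i l.
Proof.
move=> eli; rewrite mxE ifT ?lw_ge // !inE.
by case: eqVneq eli => //= _ ->.
Qed.

Lemma sum_ps_mx_col t j : \sum_i ps_mx t i j = 1.
Proof.
set O := [set i | (i != j) && E t j i].
have -> : \sum_i ps_mx t i j = \sum_(i in j |: O) lw R E t j.
  rewrite [RHS]big_mkcond; apply: eq_bigr => i _.
  by rewrite mxE /in_nbrs_plus /in_nbrs !inE (eq_sym i j).
rewrite sumr_const cardsU1 inE eqxx /= add1n lwE -/(out_deg E t j).
by rewrite -(mulr_natr (_.+1%:R^-1)) mulVf ?pnatr_eq0.
Qed.

Lemma ps_step_nbrs t v i :
  ps_step E t v i = \sum_(k in in_nbrs_plus E t i) lw R E t k * v k.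
Proof. by rewrite /in_nbrs_plus big_setU1 //= inE eqxx. Qed.

Lemma ps_stepE t v i : ps_step E t v i = \sum_j ps_mx t i j * v j.
Proof.
rewrite ps_step_nbrs big_mkcond; apply: eq_bigr => j _.
by rewrite mxE; case: ifP; rewrite ?mul0r.
Qed.

Lemma ps_vS t : (1 <= t)%N -> ps_v R E t.+1 = ps_step E t (ps_v R E t).
Proof. by case: t. Qed.

Lemma ps_v_gt0 t i : (1 <= t)%N -> 0 < ps_v R E t i.
Proof.
elim: t i => // t IHt i _; have [-> | t_gt0] := posnP t; first exact: ltr01.
rewrite ps_vS // ps_stepE (bigD1 i) //= ltr_wpDr ?mulr_gt0 ?IHt //; last first.
  by rewrite mxE /in_nbrs_plus setU11 lw_gt0.
by apply: sumr_ge0 => j _; rewrite mulr_ge0 ?ps_mx_ge0 ?ltW ?IHt.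
Qed.

Lemma sum_ps_v t : (1 <= t)%N -> \sum_i ps_v R E t i = n%:R.
Proof.
elim: t => // t IHt _; have [-> | t_gt0] := posnP t; first by rewrite sumr_const card_ord.
under eq_bigr do rewrite ps_vS // ps_stepE.
rewrite exchange_big /=; under eq_bigr do rewrite -mulr_suml sum_ps_mx_col mul1r.
exact: IHt.
Qed.

Lemma ps_v_le t i : (1 <= t)%N -> ps_v R E t i <= n%:R.
Proof.
move=> t_ge1; rewrite -(sum_ps_v t_ge1) (bigD1 i) //= lerDl.
by apply: sumr_ge0 => j _; exact: ltW (ps_v_gt0 j t_ge1).
Qed.

Lemma ps_v_max_ge1 t : (1 <= t)%N -> exists j, 1 <= ps_v R E t j.
Proof.
move=> t_ge1; have n_posR : 0 < n%:R :> R by rewrite ltr0n.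
have [b _ v_le] := arg_maxP (ps_v R E t) (P := xpredT) (i0 := Ordinal n_gt0) isT.
exists b; rewrite -(ler_pM2r n_posR) mul1r mulr_natr -(sum_ps_v t_ge1).
rewrite -[X in _ *+ X](card_ord n) -sumr_const.
by apply: ler_sum => j _; exact: v_le.
Qed.

Lemma ps_v_reach_ge t0 k i j : (1 <= t0)%N ->
  i \in reach (fun s => E (t0 + s)%N) k j ->
  n%:R^-1 ^+ k * ps_v R E t0 j <= ps_v R E (t0 + k)%N i.
Proof.
move=> t0_ge1 ij.
have traj := mxprod_trajectory (A := fun s => ps_mx (t0 + s)%N)
  (x := fun s => ps_v R E (t0 + s)%N) _ k i.
rewrite traj /=; last by move=> s l; rewrite addnS ps_vS ?ps_stepE // ltn_addr.
rewrite addn0 (bigD1 j) //= ler_wpDr //.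
- apply: sumr_ge0 => l _; rewrite mulr_ge0 ?mxprod_ge0 ?ltW ?ps_v_gt0 // => s.
  exact: ps_mx_ge0.
- apply: ler_wpM2r; first exact/ltW/ps_v_gt0.
  by apply: (mxprod_reach_ge _ _ _ ij) => // s; [exact: ps_mx_ge0 | exact: ps_mx_ge].
Qed.

Variable r : nat.
Hypothesis r_gt0 : (0 < r)%N.
Hypothesis conn : forall k x y,
  connect (fun x y => [exists s : 'I_r, E (r * k + s + 1)%N x y]) x y.

Let L := (r * n)%N.

Lemma reach_shift_full t0 j :
  (1 <= t0)%N -> reach (fun s => E (t0 + s)%N) L j = setT.
Proof.
(* a steps after t0 the clock is at r k + 1, the start of a connectivity window *)
move=> t0_ge1; pose a := (r - (t0 - 1) %% r)%N.
apply: (reach_full (r := r) (a := a)) => [k x y|].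
  have shift s : (t0 + (a + r * k + s) = r * ((t0 - 1) %/ r + 1 + k) + s + 1)%N.
    have := divn_eq (t0 - 1) r; have := ltn_pmod (t0 - 1) r_gt0; rewrite /a; lia.
  rewrite (@eq_connect _ _ (fun x y =>
    [exists s : 'I_r, E (r * ((t0 - 1) %/ r + 1 + k) + s + 1)%N x y])) //.
  by move=> u w; apply: eq_existsb => s; rewrite shift.
rewrite card_ord /L -{2}(prednK n_gt0) mulnSr addnC leq_add2l /a.
exact: leq_subr.
Qed.

Lemma ps_v_ge t i : (1 <= t)%N -> n%:R^-1 ^+ L <= ps_v R E t i.
Proof.
move=> t_ge1; have [t_le | t_gt] := leqP t L.
  have := ps_v_reach_ge (leqnn 1) (reach_self _ t.-1 i).
  rewrite add1n prednK //= mulr1; apply: le_trans.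
  by apply: ler_wiXn2l => //; rewrite (leq_trans (leq_pred t)).
have t_ge : (1 <= t - L)%N by rewrite subn_gt0.
have [b v_b] := ps_v_max_ge1 t_ge.
have i_reach : i \in reach (fun s => E (t - L + s)%N) L b.
  by rewrite reach_shift_full ?inE.
have := ps_v_reach_ge t_ge i_reach; rewrite subnK; last exact: ltnW.
by apply: le_trans; rewrite ler_peMr ?exprn_ge0.
Qed.

Lemma SmxE t i j : (1 <= t)%N ->
  Smx R E t i j = ps_mx t i j * ps_v R E t j / ps_v R E t.+1 i.
Proof.
move=> t_ge1; rewrite !mxE; case: ifP => _; last by rewrite !mul0r.
by rewrite ps_vS // ps_step_nbrs.
Qed.

Lemma Smx_row_stochastic t : (1 <= t)%N -> row_stochastic (Smx R E t).
Proof.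
move=> t_ge1; have v_gt0 k := ps_v_gt0 k t_ge1.
have vS_gt0 k := ps_v_gt0 k (leqW t_ge1).
split=> [i j | i]; first by rewrite SmxE // divr_ge0 ?mulr_ge0 ?ps_mx_ge0 ?ltW.
under eq_bigr do rewrite SmxE //.
by rewrite -mulr_suml -ps_stepE -ps_vS // mulfV // gt_eqF.
Qed.

Lemma Smx_ge t i l : (1 <= t)%N -> (l == i) || E t l i ->
  n%:R^-1 ^+ L.+2 <= Smx R E t i l.
Proof.
move=> t_ge1 eli; rewrite SmxE // exprS exprSr mulrA.
apply: ler_pM; rewrite ?mulr_ge0 ?exprn_ge0 //.
  by apply: ler_pM; rewrite ?exprn_ge0 ?ps_mx_ge ?ps_v_ge.
by rewrite lef_pV2 ?posrE ?ltr0n ?ps_v_gt0 ?ps_v_le.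
Qed.

Section Trajectory.
Variables (t0 : nat) (h : nat -> 'I_n -> R).
Hypothesis t0_ge1 : (1 <= t0)%N.
Hypothesis hS :
  forall t, (t0 <= t)%N -> forall i, h t.+1 i = \sum_j Smx R E t i j * h t j.

Lemma seminf_trajS t : (t0 <= t)%N -> seminf (h t.+1) <= seminf (h t).
Proof.
move=> t0_le; have t_ge1 := leq_trans t0_ge1 t0_le.
have S_st := Smx_row_stochastic t_ge1.
have := seminf_row_stochastic_le (h t) n_gt0 S_st (proj1 S_st).
by rewrite (eq_seminf (hS t0_le)) mulr0 subr0 mul1r.
Qed.

Lemma seminf_traj_block t : (t0 <= t)%N ->
  seminf (h (t + L)%N) <= (1 - 2 * n%:R^-1 ^+ (L.+2 * L)) * seminf (h t).
Proof.
move=> t0_le; have t_ge1 := leq_trans t0_ge1 t0_le.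
have St_ge1 s : (1 <= t + s)%N by rewrite ltn_addr.
have traj := mxprod_trajectory (A := fun s => Smx R E (t + s)%N)
  (x := fun s => h (t + s)%N).
rewrite (eq_seminf (traj _ L)) /= ?addn0 => [|s i]; last first.
  by rewrite addnS hS // (leq_trans t0_le) ?leq_addr.
apply: seminf_row_stochastic_le => //.
  by apply: mxprod_row_stochastic => s; exact: Smx_row_stochastic.
move=> i j; rewrite exprM; apply: (mxprod_reach_ge (E := fun s => E (t + s)%N)).
- exact: exprn_ge0.
- by move=> s; case: (Smx_row_stochastic (St_ge1 s)).
- by move=> s i' l; exact: Smx_ge.
- by rewrite reach_shift_full ?inE.
Qed.

End Trajectory.

End PushSum.

Lemma bernoulli_ineq (R : realDomainType) (x : R) m :
  x <= 1 -> 1 - m%:R * x <= (1 - x) ^+ m.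
Proof.
move=> x_le1; elim: m => [|m IHm]; first by rewrite mul0r subr0 expr0.
have x_ge : 0 <= 1 - x by rewrite subr_ge0.
rewrite exprSr; apply: le_trans (ler_wpM2r x_ge IHm).
have m_ge0 : 0 <= m%:R :> R by rewrite ler0n.
by rewrite -natr1; nra.
Qed.

Lemma geometric_decay (R : realFieldType) (f : nat -> R) (L : nat) (c lam : R) :
  (0 < L)%N -> 0 <= c -> c <= lam ^+ L -> 0 < lam -> lam <= 1 -> 0 <= f 0%N ->
  (forall t, f t.+1 <= f t) -> (forall t, f (t + L)%N <= c * f t) ->
  forall t, f t <= (lam ^+ L)^-1 * lam ^+ t * f 0%N.
Proof.
move=> L_gt0 c_ge0 c_le lam_gt0 lam_le1 f0_ge0 fS f_block t.
have f_noninc i j : (i <= j)%N -> f j <= f i.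
  by move=> /subnK <-; elim: (j - i)%N => // k IHk; rewrite addSn (le_trans (fS _)).
have f_blocks q : f (q * L)%N <= c ^+ q * f 0%N.
  elim: q => [|q IHq]; first by rewrite mul1r.
  rewrite mulSnr exprS -mulrA (le_trans (f_block _)) //.
  exact: ler_wpM2l.
rewrite (divn_eq t L) (le_trans (f_noninc _ _ (leq_addr _ _))) //.
apply: (le_trans (f_blocks _)); rewrite ler_wpM2r //.
have lam_pow_gt0 k : 0 < lam ^+ k by rewrite exprn_gt0.
rewrite -ler_pdivrMl ?invr_gt0 // invrK.
apply: (le_trans (_ : _ <= lam ^+ L * lam ^+ (t %/ L * L)%N)).
  apply: ler_wpM2l; first exact/ltW.
  by rewrite mulnC exprM; apply: lerXn2r; rewrite // nnegrE exprn_ge0 ?ltW.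
rewrite -exprD; apply: ler_wiXn2l => //; first exact: ltW.
by rewrite [(L + _)%N]addnC leq_add2l ltnW ?ltn_pmod.
Qed.

Lemma uniform_geometric_decay (R : realFieldType) (L : nat) (c : R) :
  (0 < L)%N -> 0 <= c -> c < 1 ->
  exists gamma lam : R, [/\ 0 < gamma, 0 <= lam, lam < 1 &
    forall f : nat -> R, 0 <= f 0%N -> (forall t, f t.+1 <= f t) ->
      (forall t, f (t + L)%N <= c * f t) ->
      forall t, f t <= gamma * lam ^+ t * f 0%N].
Proof.
move=> L_gt0 c_ge0 c_lt1.
(* dividing by L + 1 rather than L keeps lam > 0 when c = 0 and L = 1 *)
pose x := (1 - c) / L.+1%:R; pose lam := 1 - x.
have x_gt0 : 0 < x by rewrite divr_gt0 ?subr_gt0 ?ltr0n.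
have Lx_le : L%:R * x <= 1 - c.
  by rewrite /x mulrCA ler_piMr ?subr_ge0 ?ltW // ltr_pdivrMr ?ltr0n // mul1r ltr_nat.
have x_lt1 : x < 1.
  have : 1 < L.+1%:R :> R by rewrite ltr1n.
  by rewrite /x ltr_pdivrMr ?ltr0n // mul1r; lra.
have c_le : c <= lam ^+ L by apply: le_trans (bernoulli_ineq L (ltW x_lt1)); lra.
have lam_gt0 : 0 < lam by rewrite subr_gt0.
exists (lam ^+ L)^-1, lam; split; first by rewrite invr_gt0 exprn_gt0.
- exact: ltW.
- by rewrite /lam; lra.
- by move=> f f0_ge0 fS f_block; apply: (geometric_decay (c := c)); rewrite // /lam; lra.
Qed.

Unset Implicit Arguments.

Theorem lemma2 (R : realType) (n : nat) (E : nat -> rel 'I_n) :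
  (1 < n)%N ->
  (forall t : nat, (1 <= t)%N -> compatible_sym_stoch R (E t)) ->
  rep_jointly_sc E ->
  exists (gamma lambda : R),
    [/\ 0 < gamma, 0 <= lambda, lambda < 1 &
      forall (t0 : nat) (h : nat -> 'I_n -> R),
        (1 <= t0)%N ->
        (forall t : nat, (t0 <= t)%N ->
           forall i, h t.+1 i = \sum_j Smx R E t i j * h t j) ->
        forall t : nat, (t0 <= t)%N ->
          seminf (h t) <= gamma * lambda ^+ (t - t0) * seminf (h t0)].
Proof.
move=> n_gt1 _ [r [r_gt0 conn]].
set L := (r * n)%N; set eta : R := n%:R^-1 ^+ (L.+2 * L).
have L_gt0 : (0 < L)%N by rewrite muln_gt0 r_gt0 ltnW.
have eta_gt0 : 0 < eta by rewrite exprn_gt0 // invr_gt0 ltr0n ltnW.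
have eta_le : eta <= 2^-1 by apply: invn_expr_le_half; rewrite // muln_gt0.
have [||gamma [lam [gamma_gt0 lam_ge0 lam_lt1 decay]]] :=
  uniform_geometric_decay (c := 1 - 2 * eta) L_gt0; try lra.
exists gamma, lam; split=> // t0 h t0_ge1 hS t t0_le.
rewrite -(subnKC t0_le) addKn.
have := decay (fun s => seminf (h (t0 + s)%N)) _ _ _ (t - t0)%N; rewrite addn0; apply.
- exact: seminf_ge0 (ltnW n_gt1).
- by move=> s; rewrite addnS (seminf_trajS n_gt1 t0_ge1 hS) // leq_addr.
- move=> s; rewrite addnA.
  by rewrite (seminf_traj_block n_gt1 r_gt0 conn t0_ge1 hS) // leq_addr.
Qed.
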